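(* Let $\nu\ge3$ be a square-free integer with $\nu\equiv2$ or $3\pmod 4$. Define $x_0=0$ and $x_{n+1}=\sqrt{\nu+x_n}$. Let $n\ge1$. For any maximal ideal $\mathcal{P}\subseteq\mathbb{Z}[x_n]$ with $\mathcal{P}\cap\mathbb{Z}=2\mathbb{Z}$, the localization of $\mathbb{Z}[x_n]$ at $\mathcal{P}$ is a discrete valuation ring.
   Context: Square roots are the positive real ones. *)

From HB Require Import structures.
From mathcomp Require Import all_boot all_order all_algebra.
From mathcomp Require Import reals.
Set Implicit Arguments. Unset Strict Implicit. Unset Printing Implicit Defensive.
Import Order.TTheory GRing.Theory Num.Theory.
Local Open Scope ring_scope.

Definition squarefree (nu : nat) : Prop :=
  forall p : nat, prime p -> ~ (p * p %| nu)%N.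

Section Defs.
Variable R : realType.

Fixpoint xseq (nu : nat) (n : nat) : R :=
  match n with
  | 0%N => 0
  | m.+1 => Num.sqrt (nu%:R + xseq nu m)
  end.

Definition Zadj (x : R) : R -> Prop :=
  fun y => exists p : {poly int}, y = (map_poly intr p).[x].

Definition ideal_in (A I : R -> Prop) : Prop :=
  [/\ forall y, I y -> A y, I 0,
      forall a b, I a -> I b -> I (a - b)
    & forall a b, A a -> I b -> I (a * b)].

Definition maximal_ideal (A M : R -> Prop) : Prop :=
  [/\ ideal_in A M, ~ M 1 &
      forall J, ideal_in A J -> (forall y, M y -> J y) -> ~ J 1 ->
        forall y, J y -> M y].

Definition localization (A P : R -> Prop) : R -> Prop :=
  fun y => exists a s, [/\ A a, A s, ~ P s & y = a / s].

Definition principal_ideal_ring (B : R -> Prop) : Prop :=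
  forall I, ideal_in B I ->
    exists g, B g /\ forall y, I y <-> exists b, B b /\ y = b * g.

(* DVR: a principal ideal domain with exactly one nonzero maximal ideal
   (B is a subring of a field, hence a domain). *)
Definition dvr (B : R -> Prop) : Prop :=
  principal_ideal_ring B /\
  exists M, [/\ maximal_ideal B M, (exists y, M y /\ y != 0) &
    forall M', maximal_ideal B M' -> forall y, M' y <-> M y].

End Defs.

(* Write pi_n = x_n - c_n with c_n in {0, 1} chosen so that
   pi_n^2 + 2 c_n pi_n + 2 k_n = pi_(n-1) for integers k_n with k_1 odd.
   Composing these quadratics yields a 2-Eisenstein polynomial of degree 2^n
   with root pi_n, and Z[x_n] = Z[pi_n].  Now let pi be a root of a
   p-Eisenstein polynomial X^m + p q and P a maximal ideal of Z[pi] over pZ.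
   Then pi lies in P, q(pi) does not, and p = pi^m u with u a unit of Z[pi]_P.
   Every element of Z[pi] is a polynomial of degree < m in pi; dividing its
   coefficients by the highest common power of p and looking at the lowest
   coefficient prime to p shows that every nonzero element of Z[pi]_P is
   pi^k times a unit.  So every ideal of Z[pi]_P is generated by a power of
   pi, and pi generates its only maximal ideal. *)

From HB Require Import structures.
From mathcomp Require Import all_boot all_order all_algebra.
From mathcomp Require Import reals boolp.
From mathcomp Require Import zify ring lra.
Import Order.TTheory GRing.Theory Num.Theory.
Set Implicit Arguments.
Unset Strict Implicit.
Unset Printing Implicit Defensive.
Local Open Scope ring_scope.

Definition eisenstein (p : int) (m : nat) (g : {poly int}) :=
  exists q : {poly int}, [/\ (size q <= m)%N, ~~ (p %| q`_0)%Z & g = 'X^m + p *: q].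

Lemma horner_mod_mul {A : comNzRingType} (f : {poly A}) (a b c : A) :
  exists t, f.[a + c * b] = f.[a] + c * t.
Proof.
elim/poly_ind: f => [|f d [t IH]]; first by exists 0; rewrite !horner0 mulr0 addr0.
by exists (t * (a + c * b) + f.[a] * b); rewrite !hornerE IH; ring.
Qed.

Lemma exprD_mod_mul {A : comNzRingType} (a b c : A) m :
  exists t, (a + c * b) ^+ m = a ^+ m + c * t.
Proof. by have [t] := horner_mod_mul 'X^m a b c; rewrite !hornerXn; exists t. Qed.

Lemma size_XnaddZ {A : nzRingType} m (c : A) (q : {poly A}) :
  (size q <= m)%N -> size ('X^m + c *: q) = m.+1.
Proof.
move=> qm; rewrite size_polyDl size_polyXn //.
by rewrite ltnS (leq_trans (size_scale_leq _ _)).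
Qed.

Lemma monic_XnaddZ {A : nzRingType} m (c : A) (q : {poly A}) :
  (size q <= m)%N -> 'X^m + c *: q \is monic.
Proof.
move=> qm; apply/monicP; rewrite lead_coefDl ?lead_coefXn // size_polyXn.
by rewrite ltnS (leq_trans (size_scale_leq _ _)).
Qed.

Lemma size_monic_subXn {A : nzRingType} n (f : {poly A}) :
  f \is monic -> size f = n.+1 -> (size (f - 'X^n)%R <= n)%N.
Proof.
move=> /monicP lf sf; apply/leq_sizeP => j; rewrite leq_eqVlt coefB coefXn.
case/predU1P => [<-|nj]; first by rewrite eqxx -lf /lead_coef sf subrr.
by rewrite gtn_eqF // nth_default ?subrr // sf.
Qed.

Lemma eisenstein_comp p m k (g s : {poly int}) :
  p != 0 -> (1 < m)%N -> (0 < k)%N -> (size s <= k)%N ->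
  eisenstein p m g -> eisenstein p (m * k) (g \Po ('X^k + p *: s)).
Proof.
move=> p0 m1 k0 sk [q [qm q0 ->]]; set h := 'X^k + p *: s.
have [t ht] : exists t, h ^+ m = 'X^(m * k) + p *: t.
  have [t] := exprD_mod_mul 'X^k s p%:P m.
  by rewrite !mul_polyC -exprM mulnC; exists t.
have gh : ('X^m + p *: q) \Po h = 'X^(m * k) + p *: (t + (q \Po h)).
  by rewrite comp_polyD comp_Xn_poly comp_polyZ ht scalerDr addrA.
exists (t + (q \Po h)); split=> //.
- have hmon : h \is monic by apply: monic_XnaddZ.
  have sh : size h = k.+1 by apply: size_XnaddZ.
  have gmon := monic_XnaddZ p qm; have sg := size_XnaddZ p qm.
  have: (size (('X^m + p *: q) \Po h - 'X^(m * k))%R <= m * k)%N.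
    apply: size_monic_subXn.
      by apply/monicP; rewrite lead_coef_comp ?sh // (monicP gmon) (monicP hmon) expr1n mulr1.
    rewrite -[size _]prednK ?size_comp_poly ?sg ?sh //.
    by rewrite lt0n size_poly_eq0 comp_poly_eq0 ?sh // monic_neq0.
  by rewrite gh addrC addKr size_scale.
- (* (g \Po h)(0) = (p s(0))^m + p q(p s(0)), and m >= 2 kills the first term mod p^2. *)
  set c := (t + (q \Po h))`_0.
  have : (('X^m + p *: q) \Po h)`_0 = p * c.
    by rewrite gh coefD coefXn coefZ eq_sym muln_eq0 !gtn_eqF ?add0r // ltnW.
  rewrite -horner_coef0 horner_comp /h !hornerE expr0n (gtn_eqF k0) add0r.
  have [u] := horner_mod_mul q 0 s.[0] p; rewrite add0r !horner_coef0 => ->.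
  have [m' ->] : exists m', m = m'.+2 by exists m.-2; lia.
  rewrite exprMn !exprS -!mulrA -mulrDr => /esym /(mulfI p0) ->.
  by rewrite rpredDl ?rpredDr ?dvdz_mulr ?dvdzz.
Qed.

Section Zadj.
Variable R : realType.
Implicit Types (x y : R) (s t : {poly int}).

Definition zeval x : {poly int} -> R := horner_eval x \o map_poly intr.
HB.instance Definition _ x := GRing.RMorphism.on (zeval x).

Lemma zevalC x c : zeval x c%:P = c%:~R.
Proof. by rewrite /zeval /comp horner_evalE map_polyC hornerC. Qed.

Lemma zevalX x : zeval x 'X = x.
Proof. by rewrite /zeval /comp horner_evalE map_polyX hornerX. Qed.

Lemma zevalZ x c s : zeval x (c *: s) = c%:~R * zeval x s.
Proof. by rewrite -mul_polyC rmorphM /= zevalC. Qed.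

Lemma zeval_comp x s t : zeval x (s \Po t) = zeval (zeval x t) s.
Proof. by rewrite /zeval /comp horner_evalE map_comp_poly horner_comp. Qed.

Lemma zeval_drop x s : zeval x s = (s`_0)%:~R + zeval x (drop_poly 1 s) * x.
Proof.
rewrite -{1}(poly_take_drop 1 s) rmorphD rmorphM rmorphXn /= zevalX expr1.
by rewrite [take_poly 1 s]size1_polyC ?size_take_poly // coef_take_poly zevalC.
Qed.

Lemma Zadj_zeval x s : Zadj x (zeval x s).
Proof. by exists s. Qed.

Lemma ZadjP x y : Zadj x y -> exists s, y = zeval x s.
Proof. by []. Qed.

Lemma Zadj_int x (z : int) : Zadj x z%:~R.
Proof. by rewrite -(zevalC x); apply: Zadj_zeval. Qed.

Lemma Zadj_gen x : Zadj x x.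
Proof. by rewrite -{2}(zevalX x); apply: Zadj_zeval. Qed.

Lemma Zadj_sub x a b : Zadj x a -> Zadj x b -> Zadj x (a - b).
Proof. by move=> [s ->] [t ->]; exists (s - t); rewrite rmorphB !hornerE. Qed.

Lemma Zadj_opp x a : Zadj x a -> Zadj x (- a).
Proof. by move=> [s ->]; exists (- s); rewrite rmorphN !hornerE. Qed.

Lemma Zadj_add x a b : Zadj x a -> Zadj x b -> Zadj x (a + b).
Proof. by move=> [s ->] [t ->]; exists (s + t); rewrite rmorphD !hornerE. Qed.

Lemma Zadj_mul x a b : Zadj x a -> Zadj x b -> Zadj x (a * b).
Proof. by move=> [s ->] [t ->]; exists (s * t); rewrite rmorphM !hornerE. Qed.

Lemma Zadj_exp x a k : Zadj x a -> Zadj x (a ^+ k).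
Proof. by move=> [s ->]; exists (s ^+ k); rewrite rmorphXn !hornerE. Qed.

Lemma Zadj_subz x (c : int) : Zadj (x - c%:~R) = Zadj x.
Proof.
apply/funext => y; apply/propext; split=> -[s ->].
  exists (s \Po ('X - c%:P)).
  by rewrite -[RHS]/(zeval x _) zeval_comp rmorphB /= zevalX zevalC.
exists (s \Po ('X + c%:P)).
by rewrite -[RHS]/(zeval _ _) zeval_comp rmorphD /= zevalX zevalC subrK.
Qed.
End Zadj.

Section Localization.
Variables (R : realType) (x : R) (P : R -> Prop).
Hypothesis P_max : maximal_ideal (Zadj x) P.

Local Notation D := (Zadj x).
Local Notation B := (localization D P).

Lemma memP_Zadj y : P y -> D y.
Proof. by case: P_max => [[PD _ _ _] _ _]; apply: PD. Qed.

Lemma memP0 : P 0.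
Proof. by case: P_max => [[]]. Qed.

Lemma memPB a b : P a -> P b -> P (a - b).
Proof. by case: P_max => [[_ _ PB _] _ _]; apply: PB. Qed.

Lemma memPMl a b : D a -> P b -> P (a * b).
Proof. by case: P_max => [[_ _ _ PM] _ _]; apply: PM. Qed.

Lemma notP1 : ~ P 1.
Proof. by case: P_max. Qed.

Lemma memPD a b : P a -> P b -> P (a + b).
Proof. by move=> Pa Pb; rewrite -[b]opprK -[- b]sub0r; apply/memPB/memPB/Pb/memP0. Qed.

Lemma memPMr a b : P a -> D b -> P (a * b).
Proof. by move=> Pa Db; rewrite mulrC; apply: memPMl. Qed.

Lemma notP_neq0 s : ~ P s -> s != 0.
Proof. by apply: contra_not_neq => ->; apply: memP0. Qed.

Lemma memP_prime a b : D a -> D b -> P (a * b) -> P a \/ P b.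
Proof.
move=> Da Db Pab; have [Pa|nPa] := pselect (P a); [by left | right].
pose J y := exists c d, [/\ P c, D d & y = c + a * d].
have J_ideal : ideal_in D J.
  split.
  - by move=> _ [c [d [Pc Dd ->]]]; apply/Zadj_add/Zadj_mul => //; apply: memP_Zadj.
  - by exists 0, 0; rewrite mulr0 addr0; split=> //; [apply: memP0 | apply: Zadj_int 0].
  - move=> _ _ [c [d [Pc Dd ->]]] [c' [d' [Pc' Dd' ->]]].
    by exists (c - c'), (d - d'); split; [apply: memPB | apply: Zadj_sub | ring].
  - move=> e _ De [c [d [Pc Dd ->]]].
    by exists (e * c), (e * d); split; [apply: memPMl | apply: Zadj_mul | ring].
have [[c [d [Pc Dd e1]]]|nJ1] := pselect (J 1).
  have -> : b = b * c + a * b * d by rewrite -[b in LHS]mulr1 e1; ring.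
  by apply: memPD; [apply: memPMl | apply: memPMr].
case: P_max => _ _ /(_ J J_ideal) P_maximal; exfalso; apply/nPa/P_maximal => //.
  by move=> y Py; exists y, 0; rewrite mulr0 addr0; split=> //; apply: Zadj_int 0.
by exists 0, 1; rewrite mulr1 add0r; split=> //; [apply: memP0 | apply: Zadj_int 1].
Qed.

Lemma memP_exp a k : D a -> P (a ^+ k.+1) -> P a.
Proof.
move=> Da; elim: k => [|k IH]; first by rewrite expr1.
by rewrite exprS => /memP_prime[] //; apply: Zadj_exp.
Qed.

Lemma loc_Zadj a : D a -> B a.
Proof.
by move=> Da; exists a, 1; rewrite divr1; split=> //; [apply: Zadj_int 1 | apply: notP1].
Qed.

Lemma loc0 : B 0. Proof. exact: loc_Zadj (Zadj_int _ 0). Qed.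
Lemma loc1 : B 1. Proof. exact: loc_Zadj (Zadj_int _ 1). Qed.
Lemma loc_gen : B x. Proof. exact: loc_Zadj (Zadj_gen x). Qed.
Lemma loc_zeval s : B (zeval x s). Proof. exact: loc_Zadj (Zadj_zeval x s). Qed.

Lemma loc_inv s : D s -> ~ P s -> B s^-1.
Proof. by move=> Ds Ps; exists 1, s; rewrite mul1r; split=> //; apply: Zadj_int 1. Qed.

Lemma locM a b : B a -> B b -> B (a * b).
Proof.
move=> [c [s [Dc Ds Ps ->]]] [c' [s' [Dc' Ds' Ps' ->]]].
exists (c * c'), (s * s'); split; [exact: Zadj_mul | exact: Zadj_mul | | exact: mulf_div].
by case/memP_prime.
Qed.

Lemma locB a b : B a -> B b -> B (a - b).
Proof.
move=> [c [s [Dc Ds Ps ->]]] [c' [s' [Dc' Ds' Ps' ->]]].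
exists (c * s' - c' * s), (s * s'); split.
- by apply/Zadj_sub; apply: Zadj_mul.
- exact: Zadj_mul.
- by case/memP_prime.
- by rewrite -mulNr addf_div ?notP_neq0 // mulNr.
Qed.

Lemma locD a b : B a -> B b -> B (a + b).
Proof.
by move=> Ba Bb; rewrite -[b]opprK -[- b]sub0r; apply/locB/locB/Bb/loc0.
Qed.

Lemma locX a k : B a -> B (a ^+ k).
Proof.
move=> Ba; elim: k => [|k IH]; first exact: loc1.
by rewrite exprS; apply: locM.
Qed.

Definition loc_unit u := [/\ B u, B u^-1 & u != 0].

Lemma loc_unitM u v : loc_unit u -> loc_unit v -> loc_unit (u * v).
Proof.
move=> [Bu Bu' u0] [Bv Bv' v0]; split; [exact: locM | | exact: mulf_neq0].
by rewrite invfM; apply: locM.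
Qed.

Lemma loc_unitV u : loc_unit u -> loc_unit u^-1.
Proof. by move=> [Bu Bu' u0]; split; rewrite ?invrK ?invr_eq0. Qed.

Lemma loc_unit_Zadj a : D a -> ~ P a -> loc_unit a.
Proof. by move=> Da Pa; split; [apply: loc_Zadj | apply: loc_inv | apply: notP_neq0]. Qed.


Definition loc_pideal g y := exists b, B b /\ y = b * g.

Lemma loc_pideal_ideal g : B g -> ideal_in B (loc_pideal g).
Proof.
move=> Bg; split.
- by move=> _ [b [Bb ->]]; apply: locM.
- by exists 0; rewrite mul0r; split=> //; apply: loc0.
- move=> _ _ [b [Bb ->]] [c [Bc ->]].
  by exists (b - c); rewrite mulrBl; split=> //; apply: locB.
- by move=> a _ Ba [b [Bb ->]]; exists (a * b); rewrite mulrA; split=> //; apply: locM.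
Qed.

Section Eisenstein.
Variables (p : int) (m : nat) (q : {poly int}).
Hypotheses (p_neq0 : p != 0) (q_size : (size q <= m)%N) (q0_ndvd : ~~ (p %| q`_0)%Z).
Hypothesis x_root : zeval x ('X^m + p *: q) = 0.
Hypothesis memP_int : forall z : int, P z%:~R <-> (p %| z)%Z.

Lemma m_gt0 : (0 < m)%N.
Proof.
rewrite lt0n; apply: contraNneq q0_ndvd => m0.
by move: q_size; rewrite m0 leqn0 size_poly_eq0 => /eqP ->; rewrite coef0 dvdz0.
Qed.

Lemma x_exp_m : x ^+ m = p%:~R * - zeval x q.
Proof.
by apply/eqP; rewrite mulrN -addr_eq0 -x_root rmorphD /= zevalZ rmorphXn /= zevalX.
Qed.

Lemma memPx : P x.
Proof.
apply: (memP_exp (k := m.-1) (Zadj_gen x)); rewrite prednK ?m_gt0 // x_exp_m mulrC.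
by apply: memPMl (Zadj_opp (Zadj_zeval _ _)) _; apply/memP_int/dvdzz.
Qed.

Lemma memP_zeval s : P (zeval x s) <-> (p %| s`_0)%Z.
Proof.
have Px_s : P (zeval x (drop_poly 1 s) * x) := memPMl (Zadj_zeval _ _) memPx.
rewrite zeval_drop -memP_int; split=> [Ps|Ps0]; last exact: memPD.
by have := memPB Ps Px_s; rewrite addrK.
Qed.

Lemma p_factor : exists2 u, loc_unit u & p%:~R = x ^+ m * u.
Proof.
have nPw : ~ P (- zeval x q).
  by rewrite -rmorphN /= => /memP_zeval; rewrite coefN rpredN; apply/negP.
have Dw : D (- zeval x q) by apply/Zadj_opp/Zadj_zeval.
exists (- zeval x q)^-1; first exact/loc_unitV/loc_unit_Zadj.
by rewrite x_exp_m mulfK ?notP_neq0.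
Qed.

Lemma x_neq0 : x != 0.
Proof.
have [u [_ _ u0] pu] := p_factor; apply: contra_neq p_neq0 => x0.
by apply/eqP; rewrite -(intr_eq0 R) pu x0 expr0n gtn_eqF ?m_gt0 ?mul0r.
Qed.

Lemma memP_loc_pideal y : P y -> loc_pideal x y.
Proof.
move=> Py; have /ZadjP[s ys] := memP_Zadj Py.
have /dvdzP[k s0] : (p %| s`_0)%Z by apply/memP_zeval; rewrite -ys.
have [u [Bu _ _] pu] := p_factor.
exists (k%:~R * x ^+ m.-1 * u + zeval x (drop_poly 1 s)); split.
  exact: locD (locM (locM (loc_Zadj (Zadj_int _ k)) (locX _ loc_gen)) Bu) (loc_zeval _).
rewrite ys zeval_drop s0 intrM pu -[in x ^+ m](prednK m_gt0) exprSr; ring.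
Qed.

Lemma x_nonunit b : B b -> b * x != 1.
Proof.
move=> [a [s [Da Ds Ps ->]]]; apply/eqP => e; apply: (Ps).
rewrite -[s]mul1r -e mulrAC divfK ?notP_neq0 //.
exact: memPMl Da memPx.
Qed.

Lemma loc_unit_pideal u : loc_unit u -> ~ loc_pideal x u.
Proof.
move=> [_ Bu' u0] [b [Bb ub]]; move/negP: (x_nonunit (locM Bb Bu')); apply.
by rewrite mulrAC -ub divff.
Qed.

Lemma loc_unit_notin b : B b -> ~ loc_pideal x b -> loc_unit b.
Proof.
move=> [a [s [Da Ds Ps ->]]] nxb; have [Pa|nPa] := pselect (P a).
  have [c [Bc ac]] := memP_loc_pideal Pa; case: nxb.
  by exists (c / s); rewrite ac mulrAC; split=> //; apply: locM Bc (loc_inv Ds Ps).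
exact: loc_unitM (loc_unit_Zadj Da nPa) (loc_unitV (loc_unit_Zadj Ds Ps)).
Qed.

Lemma loc_unitD u b : loc_unit u -> B b -> loc_unit (u + b * x).
Proof.
move=> Uu Bb; apply: loc_unit_notin.
  by case: Uu => Bu _ _; apply: locD Bu (locM Bb loc_gen).
move=> [c [Bc e]]; apply: (loc_unit_pideal Uu).
by exists (c - b); rewrite mulrBl -e addrK; split=> //; apply: locB.
Qed.

Lemma zeval_lowest_unit (r : {poly int}) j : (j < m)%N ->
  (forall i, (i < j)%N -> (p %| r`_i)%Z) -> ~~ (p %| r`_j)%Z ->
  exists2 u, loc_unit u & zeval x r = x ^+ j * u.
Proof.
move=> jm r_low rj.
(* the coefficients below j are multiples of p = x^m u, and m > j *)
have /polyOver_dvdzP[t rt] : take_poly j r \is a polyOver (dvdz p).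
  by apply/polyOverP => i; rewrite coef_take_poly; case: ifP => [/r_low|]; rewrite ?dvdz0.
have [u0 [Bu0 _ _] pu0] := p_factor.
have Urj : loc_unit (r`_j)%:~R.
  by apply: loc_unit_Zadj (Zadj_int _ _) _; rewrite memP_int; apply/negP.
pose b := zeval x (drop_poly 1 (drop_poly j r)) + x ^+ (m - j).-1 * u0 * zeval x t.
have Bb : B b := locD (loc_zeval _) (locM (locM (locX _ loc_gen) Bu0) (loc_zeval _)).
exists ((r`_j)%:~R + b * x); first exact: loc_unitD.
rewrite -{1}(poly_take_drop j r) rt rmorphD rmorphM rmorphXn /= zevalZ zevalX.
rewrite [zeval x (drop_poly j r)]zeval_drop coef_drop_poly add0n pu0.
rewrite -{1}(subnK (ltnW jm)) -{1}(prednK (_ : 0 < m - j)%N) ?subn_gt0 // exprD exprS.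
rewrite /b; ring.
Qed.

Lemma zeval_factor (r : {poly int}) : r != 0 -> (size r <= m)%N ->
  exists k u, loc_unit u /\ zeval x r = x ^+ k * u.
Proof.
(* induction on |lead_coef r|: when p divides every coefficient, pull out p = x^m u *)
have [N] := ubnP `|lead_coef r|%N; elim: N r => // N IH r ltrN r0 rm.
have [[i ri]|/forallNP r_dvd] := pselect (exists i, ~~ (p %| r`_i)%Z).
  have [j rj j_min] := ex_minnP (ex_intro (fun i => ~~ (p %| r`_i)%Z) i ri).
  have jm : (j < m)%N.
    by rewrite ltnNge; apply: contraNN rj => /(leq_trans rm) /(nth_default 0) ->.
  have [|u Uu ->] := zeval_lowest_unit jm _ rj; last by exists j, u.
  by move=> i' lt_i'j; apply: contraTT lt_i'j => /j_min; rewrite -leqNgt.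
have /polyOver_dvdzP[r' rr'] : r \is a polyOver (dvdz p).
  by apply/polyOverP => i; apply/negPn/negP/r_dvd.
have r'0 : r' != 0 by apply: contraNneq r0 => r'0; rewrite rr' r'0 scaler0.
have p_ndvd1 : ~~ (p %| 1)%Z by apply/negP => /memP_int; apply: notP1.
have r'm : (size r' <= m)%N by rewrite -(size_scale r' p_neq0) -rr'.
have lt_r'N : (`|lead_coef r'| < N)%N.
  have p_gt1 : (1 < `|p|)%N.
    by move: p_ndvd1; rewrite dvdz1 ltn_neqAle eq_sym absz_gt0 p_neq0 => ->.
  have l_gt0 : (0 < `|lead_coef r'|)%N by rewrite absz_gt0 lead_coef_eq0.
  move: ltrN p_gt1 l_gt0; rewrite rr' lead_coefZ abszM.
  by move: `|p|%N `|lead_coef r'|%N => a b; nia.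
have [k [u [Uu r'E]]] := IH r' lt_r'N r'0 r'm.
have [u0 Uu0 pu0] := p_factor; exists (m + k)%N, (u0 * u); split; first exact: loc_unitM.
by rewrite rr' zevalZ r'E pu0 exprD; ring.
Qed.

Lemma Zadj_factor a : D a -> a != 0 -> exists k u, loc_unit u /\ a = x ^+ k * u.
Proof.
move=> /ZadjP[s ->] s0; set g := 'X^m + p *: q.
have g_monic : g \is monic by apply: monic_XnaddZ.
have sE : zeval x s = zeval x (s %% g).
  by rewrite {1}(Pdiv.IdomainMonic.divp_eq g_monic s) rmorphD rmorphM /= x_root mulr0 add0r.
rewrite sE; apply: zeval_factor.
  by apply: contra_neq s0 => r0; rewrite sE r0 rmorph0.
by rewrite -ltnS -(size_XnaddZ p q_size) ltn_modp monic_neq0.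
Qed.

Lemma loc_factor b : B b -> b != 0 -> exists k u, loc_unit u /\ b = x ^+ k * u.
Proof.
move=> [a [s [Da Ds Ps ->]]] b0.
have [|k [u [Uu ->]]] := Zadj_factor Da; first by apply: contraNneq b0 => ->; rewrite mul0r.
exists k, (u / s); rewrite mulrA; split=> //.
exact: loc_unitM Uu (loc_unitV (loc_unit_Zadj Ds Ps)).
Qed.

Lemma proper_ideal_sub_pideal J : ideal_in B J -> ~ J 1 -> forall y, J y -> loc_pideal x y.
Proof.
move=> [JB _ _ JM] nJ1 y Jy; have [->|y0] := eqVneq y 0.
  by exists 0; rewrite mul0r; split=> //; apply: loc0.
have [[|k] [u [[Bu Bu' u0] yE]]] := loc_factor (JB _ Jy) y0.
  case: nJ1; have -> : 1 = u^-1 * y by rewrite yE expr0 mul1r mulVf.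
  exact: JM.
exists (x ^+ k * u); rewrite yE exprSr mulrAC; split=> //.
exact: locM (locX _ loc_gen) Bu.
Qed.

Lemma loc_principal : principal_ideal_ring B.
Proof.
move=> I I_ideal; have [IB I0 _ IM] := I_ideal.
have [[y [Iy y0]]|I_eq0] := pselect (exists y, I y /\ y != 0); last first.
  exists 0; split; first exact: loc0.
  move=> y; split=> [Iy|[b [_ ->]]]; last by rewrite mulr0.
  exists 0; rewrite mul0r; split; first exact: loc0.
  by apply/eqP/negPn/negP => y0; apply: I_eq0; exists y.
have I_factor y' : I y' -> y' != 0 ->
    exists2 k, I (x ^+ k) & exists2 u, loc_unit u & y' = x ^+ k * u.
  move=> Iy' y'0; have [k [u [[Bu Bu' u0] y'E]]] := loc_factor (IB _ Iy') y'0.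
  exists k; last by exists u.
  by rewrite -(mulfK u0 (x ^+ k)) mulrC -y'E; apply: IM.
have [k0 Ik0 _] := I_factor y Iy y0.
have [k Ik k_min] := ex_minnP (ex_intro (fun k => `[< I (x ^+ k) >]) k0 (asboolT Ik0)).
exists (x ^+ k); split; first exact: locX _ loc_gen.
move=> z; split=> [Iz|[b [Bb ->]]]; last by apply: IM; move/asboolP: Ik.
have [->|z0] := eqVneq z 0; first by exists 0; rewrite mul0r; split=> //; apply: loc0.
have [k' Ik' [u [Bu _ _] ->]] := I_factor z Iz z0.
have kk' : (k <= k')%N by apply/k_min/asboolT.
exists (x ^+ (k' - k) * u); rewrite mulrAC -exprD subnK //; split=> //.
exact: locM (locX _ loc_gen) Bu.
Qed.

Theorem localization_dvr : dvr B.
Proof.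
have x_ideal := loc_pideal_ideal loc_gen.
have notx1 : ~ loc_pideal x 1 by move=> [b [Bb /esym/eqP]]; apply/negP/x_nonunit.
split; first exact: loc_principal.
exists (loc_pideal x); split.
- by split=> // J J_ideal _ nJ1; apply: proper_ideal_sub_pideal.
- by exists x; split; [exists 1; rewrite mul1r; split=> //; apply: loc1 | exact: x_neq0].
- move=> M [M_ideal nM1 M_max] y; split; first exact: proper_ideal_sub_pideal.
  by apply: M_max => //; apply: proper_ideal_sub_pideal.
Qed.

End Eisenstein.
End Localization.

Section Tower.
Variables (R : realType) (nu : nat).
Hypothesis nu_mod4 : (nu %% 4 = 2 \/ nu %% 4 = 3)%N.

(* With nu = 4a + r, this shift c_n makes k_n = (c_n^2 - nu - c_(n-1)) / 2
   an integer (hconst_double), and k_1 = -(2a + 1) is odd. *)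
Definition xshift n : int := if (nu %% 4 == 2)%N then 0 else (odd n)%:Z.

Definition hconst n : int :=
  - ((nu %/ 4)%N%:Z * 2 + 1 + ((nu %% 4 == 3)%N && ~~ odd n)%:Z).

Definition hlin n : {poly int} := (xshift n)%:P * 'X + (hconst n)%:P.

Definition hstep n : {poly int} := 'X^2 + 2 *: hlin n.

Fixpoint tower n : {poly int} := if n is k.+1 then tower k \Po hstep k.+1 else 'X.

Definition uniformizer n : R := xseq R nu n - (xshift n)%:~R.

Lemma hconst_double n : hconst n.+1 * 2 = xshift n.+1 ^+ 2 - nu%:Z - xshift n.
Proof.
rewrite /hconst /xshift /=; have := divn_eq nu 4.
by case: nu_mod4 => ->; case: (odd n) => /=; lia.
Qed.

Lemma size_hlin n : (size (hlin n) <= 2)%N.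
Proof.
rewrite /hlin size_MXaddC; case: ifP => // _.
by rewrite ltnS size_polyC leq_b1.
Qed.

Lemma xseq_ge0 n : 0 <= xseq R nu n.
Proof. by case: n => [|n] //=; rewrite sqrtr_ge0. Qed.

Lemma xseq_sqr n : xseq R nu n.+1 ^+ 2 = nu%:R + xseq R nu n.
Proof. by rewrite /= sqr_sqrtr // addr_ge0 ?xseq_ge0. Qed.

Lemma zeval_hstep n : zeval (uniformizer n.+1) (hstep n.+1) = uniformizer n.
Proof.
have := congr1 (intr : int -> R) (hconst_double n).
rewrite !(rmorphM, rmorphB, rmorphXn) /= => k2.
rewrite /hstep rmorphD rmorphXn /= zevalZ /hlin [zeval _ (_ + _)]rmorphD /= rmorphM /=.
rewrite zevalX !zevalC.
rewrite /uniformizer -[in RHS](addKr nu%:R (xseq R nu n)) -xseq_sqr.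
rewrite [nu%:~R](_ : _ = nu%:R) // in k2; nra.
Qed.

Lemma tower_root n : zeval (uniformizer n) (tower n) = 0.
Proof.
elim: n => [|n IH]; first by rewrite zevalX /uniformizer /xshift; case: ifP; rewrite subr0.
by rewrite /= zeval_comp zeval_hstep.
Qed.

Lemma eisenstein_tower n : (0 < n)%N -> eisenstein 2 (2 ^ n) (tower n).
Proof.
elim: n => // -[_ _|n IH _].
  exists (hlin 1); split; [exact: size_hlin | | by rewrite /= comp_polyX].
  rewrite /hlin coefD coefMX add0r coefC /hconst /= andbF addr0 rpredN rpredDl ?dvdz_mull //.
rewrite expnSr; apply: eisenstein_comp (size_hlin _) (IH _) => //.
by rewrite -{1}(expn0 2) ltn_exp2l.
Qed.

End Tower.

Theorem lemma4p4 (R : realType) (nu n : nat) :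
  (3 <= nu)%N -> squarefree nu -> (nu %% 4 = 2 \/ nu %% 4 = 3)%N ->
  (1 <= n)%N ->
  forall P : R -> Prop,
    maximal_ideal (Zadj (xseq R nu n)) P ->
    (forall z : int, P (z%:~R) <-> (2 %| z)%Z) ->
    dvr (localization (Zadj (xseq R nu n)) P).
Proof.
move=> _ _ nu_mod4 n_gt0 P P_max P_int.
have [q [q_size q0_ndvd towerE]] := eisenstein_tower nu n_gt0.
have root : zeval (uniformizer R nu n) ('X^(2 ^ n) + 2 *: q) = 0.
  by rewrite -towerE (tower_root R nu_mod4).
rewrite -(Zadj_subz _ (xshift nu n)) in P_max *.
by apply: (localization_dvr P_max) q_size q0_ndvd root P_int.
Qed.
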